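(* Let $n\ge2$ and $\Gamma_n=\langle c,\mu\mid c^n\mu^{-3}c^n\mu^{-1}=1\rangle$ (the fundamental group of the 3-manifold $M_n$ obtained by gluing the exterior of the $(2,2n)$-torus link to the orientable $I$-bundle over the Klein bottle). Embed $X(\Gamma_n,\mathrm{SL}_2(\mathbb C))_{\mathrm{red}}$ in $\mathbb C^3$ via the coordinates $(t_c,t_\mu,t_{c\mu})$, and for $k=1,\dots,n-1$ let $$Y_k=\{(t_c,t_\mu,t_{c\mu})\in\mathbb C^3\mid t_\mu=0,\ t_c=2\cos(\pi k/n)\}.$$ Then each $Y_k$ is contained in $X(\Gamma_n,\mathrm{SL}_2(\mathbb C))_{\mathrm{red}}$ and is an irreducible component of it containing characters of simple representations.
   Context: $X(\Gamma,\mathrm{SL}_2(\mathbb C))_{\mathrm{red}}$ is the $\mathrm{SL}_2(\mathbb C)$-character variety (reduced character scheme) of $\Gamma$; $t_\gamma$ is the trace function of $\gamma$, and for a two-generated group the functions $t_c,t_\mu,t_{c\mu}$ generate the coordinate ring. A representation $\rho$ is simple if $\rho(\Gamma)$ spans $M_2(\mathbb C)$ linearly. *)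

From HB Require Import structures.
From mathcomp Require Import all_boot all_order all_algebra.
From mathcomp Require Import complex.
From mathcomp Require Import reals trigo.
Set Implicit Arguments. Unset Strict Implicit. Unset Printing Implicit Defensive.
Import Order.TTheory GRing.Theory Num.Theory.
Local Open Scope ring_scope.

Section Defs.
Variable R : realType.
Local Notation C := R[i].

Definition pt := (C * C * C)%type.

(* polynomials in three variables, as iterated univariate polynomials *)
Definition poly3 := {poly {poly {poly C}}}.
Definition eval3 (p : poly3) (x : pt) : C :=
  ((p.[(x.2%:P)%:P]).[x.1.2%:P]).[x.1.1].

Definition zclosed (Z : pt -> Prop) : Prop :=
  exists S : poly3 -> Prop, forall x, Z x <-> (forall p, S p -> eval3 p x = 0).

Definition subsetP3 (A B : pt -> Prop) := forall x, A x -> B x.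

Definition zirreducible (Z : pt -> Prop) : Prop :=
  zclosed Z /\ (exists x, Z x) /\
  forall Z1 Z2, zclosed Z1 -> zclosed Z2 ->
    (forall x, Z x <-> (Z1 x \/ Z2 x)) ->
    (forall x, Z x <-> Z1 x) \/ (forall x, Z x <-> Z2 x).

Definition irr_component (X Y : pt -> Prop) : Prop :=
  zirreducible Y /\ subsetP3 Y X /\
  forall Z, zirreducible Z -> subsetP3 Y Z -> subsetP3 Z X ->
    forall x, Z x <-> Y x.

(* representations of Gamma_n = < c, mu | c^n mu^-3 c^n mu^-1 = 1 > into SL_2(C):
   rho is determined by A = rho(c), B = rho(mu) *)
Definition is_rep (n : nat) (A B : 'M[C]_2) : Prop :=
  \det A = 1 /\ \det B = 1 /\
  A ^+ n * (B ^+ 3)^-1 * A ^+ n * B^-1 = 1.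

Inductive in_image (A B : 'M[C]_2) : 'M[C]_2 -> Prop :=
| img1 : in_image A B 1
| imgA M : in_image A B M -> in_image A B (A * M)
| imgB M : in_image A B M -> in_image A B (B * M)
| imgAV M : in_image A B M -> in_image A B (A^-1 * M)
| imgBV M : in_image A B M -> in_image A B (B^-1 * M).

(* rho is simple: rho(Gamma) spans M_2(C) linearly *)
Definition simple_rep (A B : 'M[C]_2) : Prop :=
  exists s : seq 'M[C]_2, (forall M, M \in s -> in_image A B M) /\
    (<<s>>%VS = fullv).

Definition char_pt (A B : 'M[C]_2) : pt := (\tr A, \tr B, \tr (A * B)).

Definition charvar (n : nat) : pt -> Prop :=
  fun x => exists A B, is_rep n A B /\ char_pt A B = x.

Definition Yk (n k : nat) : pt -> Prop :=
  fun x => x.1.2 = 0 /\ x.1.1 = Complex (2 * cos (pi * k%:R / n%:R)) 0.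

End Defs.

Arguments Yk R n k : clear implicits.
Arguments charvar R n : clear implicits.

(* Write A = rho(c), B = rho(mu), and S_m for the Chebyshev-type polynomials
   with A^m = S_m(tr A) A - S_(m-1)(tr A) for A in SL_2.  The relation
   constrains every character of Gamma_n:
   - if tr B != 0, B conjugates X = A^n B^-2 to X^-1, which forces X to be
     scalar and then B into span(A, 1); the character is reducible, i.e. the
     Fricke polynomial kappa(t_c, t_mu, t_(c mu)) vanishes;
   - if tr B = 0, the relation reads (A^n B)^2 = -1, so S_n(t_c) t_(c mu) = 0.
   Factoring S_n = r (X - a)^m with r(a) != 0, every character lies on the line
   Y_k or in the closed set {kappa t_mu = 0, kappa r(t_c) t_(c mu) = 0}, which
   misses the point (a, 0, 3) of Y_k.  Lines are irreducible, hence Y_k is a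
   maximal irreducible closed subset.  Conversely the points of Y_k are the
   characters of (diag(e^(i th), e^(-i th)), B), th = pi k / n, with B of trace
   zero (then A^n = +-1), and B = (0 1; -1 0) gives a simple representation. *)

From HB Require Import structures.
From mathcomp Require Import all_boot all_order all_algebra.
From mathcomp Require Import complex.
From mathcomp Require Import reals trigo.
From mathcomp Require Import ring zify.
From Stdlib Require Import Classical.
Import Order.TTheory GRing.Theory Num.Theory.
Local Open Scope ring_scope.
Set Implicit Arguments. Unset Strict Implicit.

Section Matrix22.
Variable F : comNzRingType.
Implicit Types A B X Y : 'M[F]_2.

Lemma ord0_2 : (ord0 : 'I_2) = 0. Proof. exact/val_inj. Qed.
Lemma lift0_2 : lift (ord0 : 'I_2) (ord0 : 'I_1) = 1. Proof. exact/val_inj. Qed.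

Lemma det22 A : \det A = A 0 0 * A 1 1 - A 0 1 * A 1 0.
Proof.
rewrite (expand_det_row _ 0) !big_ord_recl big_ord0 /cofactor !det_mx11 !mxE /=.
have lift1_2 : lift (1 : 'I_2) (0 : 'I_1) = 0 by apply/val_inj.
rewrite lift0_2 ord0_2 lift1_2 /= expr0 expr1; ring.
Qed.

Lemma tr22 A : \tr A = A 0 0 + A 1 1.
Proof. by rewrite /mxtrace !big_ord_recl big_ord0 addr0 lift0_2 ord0_2. Qed.

Lemma mul22 A B i j : (A * B) i j = A i 0 * B 0 j + A i 1 * B 1 j.
Proof. by rewrite !mxE !big_ord_recl big_ord0 addr0 lift0_2 ord0_2. Qed.

Lemma eq22 A B :
  A 0 0 = B 0 0 -> A 0 1 = B 0 1 -> A 1 0 = B 1 0 -> A 1 1 = B 1 1 -> A = B.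
Proof.
move=> e00 e01 e10 e11; apply/matrixP => i j.
have two (l : 'I_2) : l = 0 \/ l = 1.
  by case: l => -[|[|l]] Hl //; [left | right]; apply/val_inj.
by case: (two i) => ->; case: (two j) => ->.
Qed.

Definition mk22 (a b c d : F) : 'M[F]_2 :=
  \matrix_(i < 2, j < 2)
    if i == 0 then (if j == 0 then a else b) else (if j == 0 then c else d).

Lemma one22 : (1 : 'M[F]_2) = mk22 1 0 0 1.
Proof. by apply: eq22; rewrite !mxE. Qed.

Ltac entrywise := apply: eq22; rewrite ?(mul22, tr22, det22, mxE) /=; ring.

Lemma cayley_hamilton22 A : A * A = \tr A *: A - \det A *: 1.
Proof. entrywise. Qed.

(* Polarized Cayley-Hamilton, expressing the anticommutator of X and Y. *)
Lemma anticomm22 X Y :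
  X * Y + Y * X = \tr X *: Y + \tr Y *: X + (\tr (X * Y) - \tr X * \tr Y) *: 1.
Proof. entrywise. Qed.

Lemma det_affine22 A p q :
  \det (p *: A + q *: 1) = p ^+ 2 * \det A + p * q * \tr A + q ^+ 2.
Proof. rewrite ?(mul22, tr22, det22, mxE) /=; ring. Qed.

Lemma tr_affine22 A p q : \tr (p *: A + q *: 1) = p * \tr A + 2 * q.
Proof. rewrite ?(tr22, mxE) /=; ring. Qed.

Lemma tr_mul_affine22 A p q :
  \tr (A * (p *: A + q *: 1)) = p * (\tr A ^+ 2 - 2 * \det A) + q * \tr A.
Proof. rewrite ?(mul22, tr22, det22, mxE) /=; ring. Qed.

Lemma det_scalar22 (c : F) : \det (c *: (1 : 'M[F]_2)) = c ^+ 2.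
Proof. rewrite det22 !mxE /=; ring. Qed.

Lemma diag22X (l m : F) k : mk22 l 0 0 m ^+ k = mk22 (l ^+ k) 0 0 (m ^+ k).
Proof.
elim: k => [|k ih]; first by rewrite !expr0 one22.
rewrite exprS ih; apply: eq22; rewrite !mul22 !mxE /= ?exprS; ring.
Qed.

End Matrix22.

(* Chebyshev-type polynomials: S_0 = 0, S_1 = 1, S_(m+2) = X S_(m+1) - S_m.
   They express the powers of a matrix of determinant one (lemma [SL2_powE]). *)
Fixpoint cheb (F : comNzRingType) (m : nat) : {poly F} :=
  match m with
  | 0 => 0
  | 1 => 1
  | (m'.+1 as m1).+1 => 'X * cheb F m1 - cheb F m'
  end.

Lemma chebSS (F : comNzRingType) m : cheb F m.+2 = 'X * cheb F m.+1 - cheb F m.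
Proof. by []. Qed.

Lemma cheb_at2 (F : comNzRingType) m : (cheb F m).[2] = m%:R.
Proof.
suff : (cheb F m).[2] = m%:R /\ (cheb F m.+1).[2] = m.+1%:R by case.
elim: m => [|m [ihm ihSm]]; first by split; rewrite /= ?hornerC ?horner0.
split=> //; rewrite chebSS !hornerE ihm ihSm.
have -> : (2 : F) = 2%:R by []. rewrite -natrM -natrB; last by lia.
congr (_%:R); lia.
Qed.

Lemma cheb_neq0 (F : numDomainType) m : cheb F m.+1 != 0.
Proof.
apply/eqP => S0; have := cheb_at2 F m.+1.
by rewrite S0 horner0 => /eqP; rewrite eq_sym pnatr_eq0.
Qed.

Section SL2.
Variable F : fieldType.
Implicit Types B M : 'M[F]_2.

Lemma SL2_unit M : \det M = 1 -> M \is a GRing.unit.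
Proof. by move=> dM; rewrite unitmxE dM unitr1. Qed.

Lemma SL2_inv M : \det M = 1 -> M^-1 = \tr M *: 1 - M.
Proof.
move=> dM; apply: (mulrI (SL2_unit dM)).
rewrite mulrV ?SL2_unit // mulrBr -scalerAr mulr1 cayley_hamilton22 dM scale1r.
by rewrite opprB addrC subrK.
Qed.

Lemma detX22 M m : \det (M ^+ m) = \det M ^+ m.
Proof. by elim: m => [|m ih]; rewrite ?expr0 ?det1 // !exprS det_mulmx ih. Qed.

Lemma SL2_powE M m : \det M = 1 ->
  M ^+ m.+1 = (cheb F m.+1).[\tr M] *: M - (cheb F m).[\tr M] *: 1.
Proof.
move=> dM; elim: m => [|m ih]; first by rewrite expr1 /= hornerC horner0 scale1r scale0r subr0.
rewrite exprS ih chebSS !hornerE mulrBr -!scalerAr mulr1 cayley_hamilton22 dM scale1r.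
apply: eq22; rewrite !mxE /=; ring.
Qed.

Lemma SL2_tr0_sqr B : \det B = 1 -> \tr B = 0 -> B * B = - 1.
Proof. by move=> dB tB; rewrite cayley_hamilton22 tB dB scale0r scale1r sub0r. Qed.

Lemma SL2_tr0_inv B : \det B = 1 -> \tr B = 0 -> B^-1 = - B.
Proof. by move=> dB tB; rewrite SL2_inv // tB scale0r sub0r. Qed.

Lemma SL2_sqrN1_tr M : \det M = 1 -> M * M = - 1 -> \tr M = 0.
Proof.
move=> dM; rewrite cayley_hamilton22 dM scale1r => /eqP.
rewrite subr_eq addrC subrr scaler_eq0 => /orP[/eqP // | /eqP M0].
by move: dM; rewrite M0 det0 => /eqP; rewrite eq_sym oner_eq0.
Qed.

End SL2.

(* The Fricke polynomial kappa(x, y, z) = x^2 + y^2 + z^2 - xyz - 4; for A, B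
   in SL_2, kappa(tr A, tr B, tr AB) = tr[A, B] - 2 vanishes exactly on the
   characters of reducible representations. *)
Definition kappa (F : comNzRingType) (x y z : F) :=
  x ^+ 2 + y ^+ 2 + z ^+ 2 - x * y * z - 4.

Section RelationConstraints.
Variable F : fieldType.
Implicit Types A B P X : 'M[F]_2.

Lemma kappa_affine A p q :
  \det A = 1 -> \det (p *: A + q *: 1) = 1 ->
  kappa (\tr A) (\tr (p *: A + q *: 1)) (\tr (A * (p *: A + q *: 1))) = 0.
Proof.
move=> dA; rewrite det_affine22 tr_affine22 tr_mul_affine22 dA /kappa => dB.
have -> : 0 = (\tr A ^+ 2 - 4) * (1 - (p ^+ 2 * 1 + p * q * \tr A + q ^+ 2)).
  by rewrite dB subrr mulr0.
ring.
Qed.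

Lemma anticomm_scalar X B :
  X * B + B * X = \tr X *: B -> \tr B != 0 -> exists c, X = c *: 1.
Proof.
rewrite anticomm22 -[RHS]addr0 -addrA => /addrI /eqP; rewrite addr_eq0 => /eqP eX tB.
exists (- (\tr (X * B) - \tr X * \tr B) / \tr B).
by rewrite mulrC -scalerA scaleNr -eX scalerA mulVf // scale1r.
Qed.

Lemma relation_tr0 P B : \det B = 1 -> \tr B = 0 ->
  (P * (B ^+ 3)^-1 * P * B^-1 = 1 <-> (P * B) * (P * B) = - 1).
Proof.
move=> dB tB; have BB := SL2_tr0_sqr dB tB; have Binv := SL2_tr0_inv dB tB.
have -> : (B ^+ 3)^-1 = B by rewrite -exprVn Binv exprS expr2 mulrNN BB mulrN1 opprK.
rewrite Binv mulrN !mulrA; split => [<- | ->]; by rewrite ?opprK.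
Qed.

Lemma rep_tr0_constraint n A B :
  \det A = 1 -> \det B = 1 -> A ^+ n.+1 * (B ^+ 3)^-1 * A ^+ n.+1 * B^-1 = 1 ->
  \tr B = 0 -> (cheb F n.+1).[\tr A] * \tr (A * B) = 0.
Proof.
move=> dA dB rel tB; move/(relation_tr0 _ dB tB): rel => PB2.
have dPB : \det (A ^+ n.+1 * B) = 1 by rewrite det_mulmx detX22 dA dB expr1n mulr1.
have := SL2_sqrN1_tr dPB PB2.
by rewrite SL2_powE // mulrBl -!scalerAl mul1r !linearD !linearN !linearZ /= tB mulr0 subr0.
Qed.

(* Characters of Gamma_(n+1) with t_mu != 0 are characters of reducible
   representations: setting X = A^(n+1) B^-2, the relation says that B
   conjugates X to X^-1, which forces X to be scalar; then A^(n+1), hence B,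
   lies in the affine span of A and 1. *)
Lemma rep_trN0_constraint n A B :
  \det A = 1 -> \det B = 1 -> A ^+ n.+1 * (B ^+ 3)^-1 * A ^+ n.+1 * B^-1 = 1 ->
  \tr B != 0 -> kappa (\tr A) (\tr B) (\tr (A * B)) = 0.
Proof.
move=> dA dB rel tB; have uB := SL2_unit dB.
set P := A ^+ n.+1 in rel *.
set X := P * B^-1 ^+ 2.
have dX : \det X = 1 by rewrite det_mulmx !detX22 dA det_inv dB invr1 !expr1n mulr1.
have conjX : B^-1 * X * B = X^-1.
  apply: (mulrI (SL2_unit dX)); rewrite mulrV ?SL2_unit // -rel -exprVn /X.
  by rewrite !exprSr !expr0 !mul1r !mulrA mulrVK.
have XB : X * B + B * X = \tr X *: B.
  by rewrite -[X * B](mulVKr uB) [B^-1 * _]mulrA conjX -mulrDr SL2_inv // subrK -scalerAr mulr1.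
have [c Xc] := anticomm_scalar XB tB.
have c0 : c != 0.
  by apply: contra_eq_neq dX; rewrite Xc det_scalar22 => ->; rewrite expr0n eq_sym oner_neq0.
have Pc : P = (c * \tr B) *: B - c *: 1.
  have -> : P = X * (B * B) by rewrite /X expr2 !mulrA !mulrVK.
  by rewrite Xc -scalerAl mul1r cayley_hamilton22 dB scale1r scalerBr scalerA.
have cB0 : c * \tr B != 0 by rewrite mulf_neq0.
have Baff : B = ((c * \tr B)^-1 * (cheb F n.+1).[\tr A]) *: A
              + ((c * \tr B)^-1 * (c - (cheb F n).[\tr A])) *: 1.
  apply: (scalerI cB0); rewrite scalerDr !scalerA !mulrA mulfV // !mul1r scalerBl.
  have -> : (c * \tr B) *: B = P + c *: 1 by rewrite Pc subrK.
  by rewrite /P SL2_powE // addrAC addrA.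
by rewrite Baff kappa_affine // -Baff.
Qed.

End RelationConstraints.

Section Zariski.
Variable R : realType.
Local Notation C := R[i].
Local Notation pt := (pt R).
Local Notation poly3 := (poly3 R).
Implicit Types (x : pt) (p : poly3) (Z : pt -> Prop).

Definition Tc : poly3 := ('X%:P)%:P.
Definition Tm : poly3 := 'X%:P.
Definition Tcm : poly3 := 'X.
Definition in_tc (r : {poly C}) : poly3 := (r%:P)%:P.

Lemma eval_mul p q x : eval3 (p * q) x = eval3 p x * eval3 q x.
Proof. by rewrite /eval3 !hornerE. Qed.

Lemma eval_Tm x : eval3 Tm x = x.1.2. Proof. by rewrite /eval3 /Tm !hornerE. Qed.
Lemma eval_Tcm x : eval3 Tcm x = x.2. Proof. by rewrite /eval3 /Tcm !hornerE. Qed.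

Lemma eval_kappa x : eval3 (kappa Tc Tm Tcm) x = kappa x.1.1 x.1.2 x.2.
Proof. by rewrite /eval3 /kappa /Tc /Tm /Tcm !(hornerMn, hornerE). Qed.

Lemma eval_in_tc r x : eval3 (in_tc r) x = r.[x.1.1].
Proof. by rewrite /eval3 /in_tc !hornerE. Qed.

Lemma zclosedI Z1 Z2 : zclosed Z1 -> zclosed Z2 -> zclosed (fun x => Z1 x /\ Z2 x).
Proof.
move=> [S1 h1] [S2 h2]; exists (fun p => S1 p \/ S2 p) => x; split.
  by move=> [/h1 z1 /h2 z2] p [/z1 | /z2].
by move=> h; split; [apply/h1 => p ?; apply: h; left | apply/h2 => p ?; apply: h; right].
Qed.

Lemma zclosed_separate Z x : zclosed Z -> ~ Z x ->
  exists2 p, (forall y, Z y -> eval3 p y = 0) & eval3 p x != 0.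
Proof.
move=> [S hS] nZx; have /not_all_ex_not [p hp] : ~ (forall p, S p -> eval3 p x = 0).
  by move/hS.
exists p; last by apply/eqP => px0; apply: hp.
by move=> y /hS; apply; apply: NNPP => nSp; apply: hp => /nSp.
Qed.

Definition line (a : C) : pt -> Prop := fun x => x.1.2 = 0 /\ x.1.1 = a.

Lemma line_closed a : zclosed (line a).
Proof.
exists (fun p => p = Tm \/ p = Tc - (a%:P%:P)%:P) => x.
rewrite /line /eval3 /Tm /Tc; split.
  by move=> [e2 e1] p [-> | ->]; rewrite !hornerE ?e1 ?e2 ?subrr.
move=> h; split; first by have := h _ (or_introl erefl); rewrite !hornerE.
by apply/eqP; rewrite -subr_eq0; have := h _ (or_intror erefl); rewrite !hornerE => ->.
Qed.

Lemma line_restrict a p : exists q : {poly C}, forall t, eval3 p ((a, 0), t) = q.[t].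
Proof.
elim/poly_ind: p => [|p c [q hq]]; first by exists 0 => t; rewrite /eval3 !horner0.
exists (q * 'X + ((c.[0%:P]).[a])%:P) => t.
by move: (hq t); rewrite /eval3 !hornerE => ->.
Qed.

Lemma line_proper_closed a Z x : zclosed Z -> line a x -> ~ Z x ->
  exists2 q : {poly C}, q != 0 & forall t, Z ((a, 0), t) -> q.[t] = 0.
Proof.
case: x => [[tc tm] t0] cZ [/= -> ->] nZx.
have [p pZ px] := zclosed_separate cZ nZx; have [q hq] := line_restrict a p.
exists q; first by apply: contra_neq px => q0; rewrite hq q0 horner0.
by move=> t /pZ; rewrite hq.
Qed.

(* A line is irreducible: if neither piece of a decomposition Z1 \/ Z2 were the
   whole line, the product of the two cutting polynomials would vanish on the
   whole line, i.e. at every point of the infinite field C. *)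
Lemma line_irreducible a : zirreducible (line a).
Proof.
split; first exact: line_closed.
split; first by exists ((a, 0), 0).
move=> Z1 Z2 c1 c2 hU; apply: NNPP => /not_or_and [nZ1 nZ2].
have missed Z : (forall x, Z x -> line a x) -> ~ (forall x, line a x <-> Z x) ->
    exists2 x, line a x & ~ Z x.
  move=> ZL nL; apply: NNPP => hL; apply: nL => x; split => [Lx | /ZL //].
  by apply: NNPP => nZx; apply: hL; exists x.
have [x1 L1 nZ1x] := missed Z1 (fun x z => proj2 (hU x) (or_introl z)) nZ1.
have [x2 L2 nZ2x] := missed Z2 (fun x z => proj2 (hU x) (or_intror z)) nZ2.
have [q1 q1N0 q1Z] := line_proper_closed c1 L1 nZ1x.
have [q2 q2N0 q2Z] := line_proper_closed c2 L2 nZ2x.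
have /closed_nonrootP [t] := mulf_neq0 q1N0 q2N0; rewrite /root hornerM.
have /hU [/q1Z -> | /q2Z ->] : line a ((a, 0), t) by [].
  by rewrite mul0r eqxx.
by rewrite mulr0 eqxx.
Qed.

(* Maximality criterion: if Y is closed, X is covered by Y and a
   closed set W not containing Y, then any irreducible closed Z with
   Y <= Z <= X equals Y (Z = (Z /\ Y) \/ (Z /\ W) and Z /\ W misses a point of Y). *)
Lemma irreducible_maximal X Y W : zclosed Y -> zclosed W ->
  (forall x, X x -> Y x \/ W x) -> (exists2 y, Y y & ~ W y) ->
  forall Z, zirreducible Z -> subsetP3 Y Z -> subsetP3 Z X -> forall x, Z x <-> Y x.
Proof.
move=> cY cW XYW [y Yy nWy] Z [cZ [_ irrZ]] YZ ZX.
have [] := irrZ _ _ (zclosedI cZ cY) (zclosedI cZ cW).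
- move=> x; split=> [Zx | [] []] //.
  by case: (XYW _ (ZX _ Zx)); [left | right].
- by move=> hY x; split=> [/hY [] | /YZ].
- by move=> hW; case: nWy; have /hW [] := YZ _ Yy.
Qed.

Lemma line_component a X W :
  subsetP3 (line a) X -> zclosed W -> (forall x, X x -> line a x \/ W x) ->
  (exists2 y, line a y & ~ W y) -> irr_component X (line a).
Proof.
move=> LX cW XLW LW; split; first exact: line_irreducible.
by split=> //; apply: irreducible_maximal XLW LW; first exact: line_closed.
Qed.

End Zariski.

Section CharacterVariety.
Variable R : realType.
Local Notation C := R[i].
Local Notation pt := (pt R).

(* The closed set containing every character of Gamma_(n+1) off the line
   {t_mu = 0, t_c = a}, where S_(n+1) = r (X - a)^m with r(a) != 0: either
   kappa = 0 (reducible characters), or t_mu = 0 and r(t_c) t_(c mu) = 0. *)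
Definition residual (r : {poly C}) : pt -> Prop := fun x =>
  kappa x.1.1 x.1.2 x.2 * x.1.2 = 0 /\ kappa x.1.1 x.1.2 x.2 * r.[x.1.1] * x.2 = 0.

Lemma residual_closed r : zclosed (residual r).
Proof.
exists (fun p => p = kappa (Tc R) (Tm R) (Tcm R) * Tm R \/
                 p = kappa (Tc R) (Tm R) (Tcm R) * in_tc r * Tcm R) => x.
rewrite /residual; split => [[e1 e2] p [-> | ->] | h].
- by rewrite eval_mul eval_kappa eval_Tm.
- by rewrite !eval_mul eval_kappa eval_in_tc eval_Tcm.
split; first by have := h _ (or_introl erefl); rewrite eval_mul eval_kappa eval_Tm.
by have := h _ (or_intror erefl); rewrite !eval_mul eval_kappa eval_in_tc eval_Tcm.
Qed.

Lemma charvar_cover n a r m : cheb C n.+1 = r * ('X - a%:P) ^+ m ->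
  forall x, charvar R n.+1 x -> line a x \/ residual r x.
Proof.
move=> Sfact x [A [B [[dA [dB rel]] <-]]]; rewrite /char_pt /line /residual /=.
have [tB | tB] := eqVneq (\tr B) 0; last first.
  by right; rewrite (rep_trN0_constraint dA dB rel tB) !mul0r.
have [tA | tA] := eqVneq (\tr A) a; first by left.
right; split; first by rewrite tB mulr0.
have := rep_tr0_constraint dA dB rel tB; rewrite Sfact !hornerE.
move/eqP; rewrite mulf_eq0 mulf_eq0 expf_eq0 subr_eq0 (negbTE tA) andbF orbF.
by rewrite -mulf_eq0 -mulrA => /eqP ->; rewrite mulr0.
Qed.

(* The point (a, 0, 3) of the line avoids the residual set when a is real
   and r(a) != 0, since kappa(a, 0, 3) = a^2 + 5 > 0. *)
Lemma residual_avoids (s : R) r :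
  r.[Complex s 0] != 0 -> ~ residual r ((Complex s 0, 0), 3).
Proof.
move=> rN0 [_]; apply/eqP; rewrite /= !mulf_neq0 // ?pnatr_eq0 //.
have -> : kappa (Complex s 0) 0 3 = Complex s 0 ^+ 2 + 5 by rewrite /kappa; ring.
have sq_ge0 : 0 <= Complex s 0 ^+ 2.
  by rewrite complexr0 -rmorphXn -(rmorph0 (real_complex R)) lecR sqr_ge0.
by rewrite gt_eqF // ltr_wpDl ?ltr0n.
Qed.

End CharacterVariety.

Lemma span_diag_rot (F : fieldType) (l m : F) : l != m ->
  <<[:: 1; mk22 l 0 0 m; mk22 0 1 (-1) 0; mk22 0 1 (-1) 0 * mk22 l 0 0 m]>>%VS = fullv.
Proof.
move=> lm; have dlm : l - m != 0 by rewrite subr_eq0.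
apply/vspaceP => M; rewrite memvf.
set D := mk22 l 0 0 m; set J := mk22 0 1 (-1) 0.
have -> : M = ((- M 0 0 * m + M 1 1 * l) / (l - m)) *: 1 + ((M 0 0 - M 1 1) / (l - m)) *: D
   + ((M 0 1 + M 1 0) * l / (l - m) - M 1 0) *: J + (- (M 0 1 + M 1 0) / (l - m)) *: (J * D).
  have -> : J * D = mk22 0 m (-l) 0 by apply: eq22; rewrite mul22 !mxE /=; ring.
  by apply: eq22; rewrite ?mxE /=; field; exact: dlm.
by repeat apply: memvD; apply: memvZ; apply: memv_span; rewrite !inE eqxx ?orbT.
Qed.

Section Rotation.
Variables (R : realType) (th : R).
Local Notation C := R[i].
Local Open Scope complex_scope.

Definition expi (x : R) : C := cos x +i* sin x.
Definition rot : 'M[C]_2 := mk22 (expi th) 0 0 (expi (- th)).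

Lemma expiX (x : R) m : expi x ^+ m = expi (x *+ m).
Proof.
rewrite /expi; elim: m => [|m ih]; first by rewrite expr0 mulr0n cos0 sin0.
by rewrite exprS ih mulrS cosD sinD /=; simpc; congr (_ +i* _); rewrite addrC.
Qed.

Lemma det_rot : \det rot = 1.
Proof.
rewrite det22 !mxE /= mulr0 subr0 /expi cosN sinN; simpc.
by rewrite -!expr2 cos2Dsin2 [sin th * _]mulrC addNr.
Qed.

Lemma tr_rot : \tr rot = Complex (2 * cos th) 0.
Proof. rewrite tr22 !mxE /= /expi cosN sinN; simpc. by rewrite -mulr2n mulr_natl. Qed.

Lemma expi_neq : sin th != 0 -> expi th != expi (- th).
Proof.
move=> s0; rewrite /expi cosN sinN eq_complex /= eqxx /= -subr_eq0 opprK.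
by rewrite -mulr2n -mulr_natl mulf_neq0 // pnatr_eq0.
Qed.

Lemma rot_pow_scalar m : sin (th *+ m) = 0 -> rot ^+ m = (cos (th *+ m) +i* 0) *: 1.
Proof.
move=> s0; rewrite /rot diag22X !expiX mulNrn /expi cosN sinN s0 oppr0.
by apply: eq22; rewrite !mxE /= ?mulr1 ?mulr0.
Qed.

(* If m th is a multiple of pi, rot and any trace-zero B in SL_2 define a
   representation of Gamma_m: (rot^m B)^2 = B^2 = -1. *)
Lemma rot_rep m B :
  sin (th *+ m) = 0 -> \det B = 1 -> \tr B = 0 -> is_rep m rot B.
Proof.
move=> s0 dB tB; split; first exact: det_rot.
split=> //; apply/(relation_tr0 _ dB tB).
have e2 : (cos (th *+ m) +i* 0) * (cos (th *+ m) +i* 0) = 1 :> C.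
  simpc; rewrite -expr2; have := cos2Dsin2 (th *+ m).
  by rewrite s0 expr0n /= addr0 => ->.
rewrite rot_pow_scalar // -!scalerAl !mul1r -scalerAr scalerA e2 scale1r.
exact: SL2_tr0_sqr.
Qed.

Lemma rot_line_chars m t : sin (th *+ m) = 0 -> sin th != 0 ->
  exists B, is_rep m rot B /\ char_pt rot B = ((\tr rot, 0), t).
Proof.
move=> s0 s1; have dN0 : expi th - expi (- th) != 0 by rewrite subr_eq0 expi_neq.
set x := t / (expi th - expi (- th)).
set B := mk22 x 1 (-1 - x ^+ 2) (- x).
have dB : \det B = 1 by rewrite det22 !mxE /=; ring.
have tB : \tr B = 0 by rewrite tr22 !mxE /= subrr.
exists B; split; first exact: rot_rep.
rewrite /char_pt tB [\tr (rot * B)]tr22 !mul22 !mxE /=; congr (_, _).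
by rewrite /x; field.
Qed.

Lemma rot_simple : sin th != 0 -> simple_rep rot (mk22 0 1 (-1) 0).
Proof.
move=> s1; set J := mk22 _ _ _ _.
exists [:: 1; rot; J; J * rot]; split; last exact: span_diag_rot (expi_neq s1).
have img_rot : in_image rot J rot by have := imgA (img1 rot J); rewrite mulr1.
move=> M; rewrite !inE => /or4P [] /eqP ->.
- exact: img1.
- exact: img_rot.
- by have := imgB (img1 rot J); rewrite mulr1.
- exact: imgB.
Qed.

End Rotation.

Theorem mainTheorem15 (R : realType) (n k : nat) :
  (2 <= n)%N -> (1 <= k)%N -> (k <= n - 1)%N ->
  subsetP3 (Yk R n k) (charvar R n) /\
  irr_component (charvar R n) (Yk R n k) /\
  (exists A B : 'M[R[i]]_2,
      is_rep n A B /\ simple_rep A B /\ Yk R n k (char_pt A B)).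
Proof.
case: n => [//|n] n2 k1 kn.
set th : R := pi * k%:R / n.+1%:R.
have n0 : n.+1%:R != 0 :> R by rewrite pnatr_eq0.
(* 0 < th < pi, so sin th != 0, while (n+1) th = k pi. *)
have sin_th : sin th != 0.
  apply/lt0r_neq0/sin_gt0_pi; rewrite divr_gt0 ?mulr_gt0 ?pi_gt0 ?ltr0n //=.
  by rewrite ltr_pdivrMr ?ltr0n // ltr_pM2l ?pi_gt0 // ltr_nat; lia.
have sin_nth : sin (th *+ n.+1) = 0.
  rewrite -mulr_natr /th divfK // mulr_natr.
  by have := alternatingn (@sinDpi R) k 0; rewrite add0r sin0 mulr0.
have Yline : Yk R n.+1 k = line (\tr (rot th)) by rewrite tr_rot.
have YX : subsetP3 (Yk R n.+1 k) (charvar R n.+1).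
  rewrite Yline => -[[tc tm] t] [/= -> ->].
  by have [B [rB cB]] := rot_line_chars t sin_nth sin_th; exists (rot th), B.
split=> //; split.
  have [m [r /= rN0 Sfact]] :=
    multiplicity_XsubC (cheb R[i] n.+1) (Complex (2 * cos th) 0).
  rewrite cheb_neq0 /= in rN0.
  rewrite Yline tr_rot; apply: line_component YX (residual_closed r) (charvar_cover Sfact) _.
  by exists ((Complex (2 * cos th) 0, 0), 3); [| exact: residual_avoids].
exists (rot th), (mk22 0 1 (-1) 0); split.
  by apply: rot_rep => //; rewrite (det22, tr22) !mxE /=; ring.
by split; [exact: rot_simple | rewrite /char_pt tr_rot tr22 !mxE /= addr0].
Qed.
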